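(* Consider a direct channel Omega implementation on a fully connected network of $n$ processes in which, in each round, each directed channel is timely independently with probability $p<1$, independently across rounds. Then the leader stability time tends to $0$ exponentially fast as $n\to\infty$. Moreover, if the leader stability time is to remain above a fixed constant $E>0$ as $n$ grows, then the channel timeliness probability $p=p_n$ must converge to $1$ exponentially fast as $n\to\infty$.
   Context: A network has $n$ processes and a directed channel from every process to every other. Time is divided into rounds; in each round every directed channel is timely with probability $p$, independently of other channels and of other rounds. In a direct channel (single-hop) Omega implementation, a process can be the leader in a round only if, in that round, it has a timely direct channel to every other process. For a fixed process $x$, let $X$ be the number $r\ge 0$ of consecutive rounds during which $x$ retains timely direct channels to all other processes before the property first fails, so that $\mathbb{P}(X=r)=q^r(1-q)$ with $q=p^{n-1}$. The leader stability time is $\mathbb{E}(X)$. *)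

From mathcomp Require Import all_boot all_order all_algebra.
From mathcomp Require Import all_classical all_reals all_analysis.
Set Implicit Arguments. Unset Strict Implicit. Unset Printing Implicit Defensive.
Import Order.TTheory GRing.Theory Num.Theory.
Local Open Scope ring_scope.

(* Probability that a fixed process x has timely direct channels to all
   other n-1 processes in one round: q = p^(n-1). *)
Definition all_timely_prob {R : realType} (p : R) (n : nat) : R := p ^+ n.-1.

Definition stab_pmf {R : realType} (p : R) (n : nat) (r : nat) : R :=
  (all_timely_prob p n) ^+ r * (1 - all_timely_prob p n).

Definition leader_stability_time {R : realType} (p : R) (n : nat) : \bar R :=
  (\sum_(0 <= r <oo) ((r%:R * stab_pmf p n r)%:E))%E.

(* With q = p^(n-1) the round count X is geometric, so E(X) = q/(1-q) (and 0 when
   q = 1); only the upper bound E(X) <= q/(1-q) is needed.  For a fixed p < 1,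
   q <= p and q <= a^(n-1) with a = (1+p)/2, whence E(X) <= a^(n-1)/(1-p).
   Conversely E <= E(X) <= q/(1-q) forces p_n^(n-1) = q >= c := E/(1+E), i.e.
   p_n >= c^(1/(n-1)); Bernoulli's inequality p^k (1 + k(1-p)) <= 1 then turns
   this into (n-1)(1-p_n) <= (1-c)/c, so p_n -> 1. *)

From mathcomp Require Import all_boot all_order all_algebra.
From mathcomp Require Import all_classical all_reals all_analysis.
From mathcomp Require Import ring lra zify.
Import Order.TTheory GRing.Theory Num.Theory.
Import numFieldNormedType.Exports.
Local Open Scope classical_set_scope.
Local Open Scope ring_scope.

Lemma geometric_mean_partial_sumE {R : comNzRingType} (q : R) (m : nat) :
  (1 - q) * (\sum_(0 <= r < m) r%:R * (q ^+ r * (1 - q)) + m%:R * q ^+ m)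
  = q - q ^+ m.+1.
Proof.
elim: m => [|m IH]; first by rewrite big_nil !mulr0n mul0r addr0 mulr0 expr1 subrr.
rewrite big_nat_recr //= -natr1 !exprS in IH *.
transitivity ((1 - q) * (\sum_(0 <= i < m) i%:R * (q ^+ i * (1 - q))
                          + m%:R * q ^+ m) + (1 - q) * (q * q ^+ m)); first by ring.
by rewrite IH; ring.
Qed.

Lemma geometric_mean_partial_sum_le {R : realFieldType} (q : R) (m : nat) :
  0 <= q < 1 -> \sum_(0 <= r < m) r%:R * (q ^+ r * (1 - q)) <= q / (1 - q).
Proof.
move=> /andP[q0 q1]; rewrite ler_pdivlMr ?subr_gt0 //.
have := geometric_mean_partial_sumE q m.
have : 0 <= m%:R * q ^+ m by apply: mulr_ge0 => //; exact: exprn_ge0.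
have : 0 <= q ^+ m.+1 by exact: exprn_ge0.
set S := \sum_(0 <= r < m) _; nra.
Qed.

Lemma expr_Bernoulli_le1 {R : realFieldType} (p : R) (k : nat) :
  0 <= p <= 1 -> p ^+ k * (1 + k%:R * (1 - p)) <= 1.
Proof.
move=> /andP[p0 p1]; elim: k => [|k IH]; first by rewrite expr0 mul0r addr0 mulr1.
apply: le_trans IH; rewrite -subr_ge0.
have -> : p ^+ k * (1 + k%:R * (1 - p)) - p ^+ k.+1 * (1 + k.+1%:R * (1 - p))
          = p ^+ k * (1 - p) ^+ 2 * k.+1%:R by rewrite exprS -natr1; ring.
by rewrite !mulr_ge0 ?exprn_ge0 ?subr_ge0.
Qed.

Section LeaderStabilityTime.
Context {R : realType}.

Lemma leader_stability_time_le (p : R) (n : nat) :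
  0 <= all_timely_prob p n < 1 ->
  (leader_stability_time p n <=
    (all_timely_prob p n / (1 - all_timely_prob p n))%:E)%E.
Proof.
move=> q01; have /andP[q0 q1] := q01.
apply: lime_le.
  apply: is_cvg_nneseries => r _ _; rewrite lee_fin mulr_ge0 //.
  by apply: mulr_ge0; [exact: exprn_ge0 | rewrite subr_ge0 ltW].
apply: nearW => m; rewrite /= sumEFin lee_fin.
exact: geometric_mean_partial_sum_le.
Qed.

Lemma leader_stability_time_eq0 (p : R) (n : nat) :
  all_timely_prob p n = 1 -> leader_stability_time p n = 0%E.
Proof.
move=> q1; rewrite /leader_stability_time eseries0 // => r _ _.
by rewrite /stab_pmf q1 subrr !mulr0.
Qed.

Lemma leader_stability_time_expn_decay (p : R) : 0 <= p -> p < 1 ->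
  exists C a : R, [/\ 0 < C, 0 < a, a < 1 &
    forall n : nat, (2 <= n)%N ->
      (leader_stability_time p n <= (C * a ^+ n)%:E)%E].
Proof.
move=> p0 p1; set a := (p + 1) / 2.
have a0 : 0 < a by rewrite /a; lra.
have pa : p <= a by rewrite /a; lra.
have p1' : 0 < 1 - p by rewrite subr_gt0.
exists ((1 - p) * a)^-1, a; split => //; first by rewrite invr_gt0 mulr_gt0.
  by rewrite /a; lra.
case=> [|[|k]] // _; set q := all_timely_prob p k.+2.
have qp : q <= p by rewrite ler_iXnr // ltW.
have qa : q <= a ^+ k.+1 by rewrite lerXn2r // nnegrE ltW.
have q0 : 0 <= q by rewrite exprn_ge0.
have q1 : q < 1 by lra.
apply: le_trans (leader_stability_time_le p k.+2 _) _; first by rewrite -/q q0 q1.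
rewrite lee_fin.
have -> : ((1 - p) * a)^-1 * a ^+ k.+2 = a ^+ k.+1 / (1 - p).
  by rewrite exprS; field; rewrite !gt_eqF.
have inv_le : (1 - q)^-1 <= (1 - p)^-1.
  by rewrite lef_pV2 ?posrE ?subr_gt0 // lerD2l lerN2.
by apply: ler_pM => //; rewrite invr_ge0 subr_ge0 ltW.
Qed.

Lemma all_timely_prob_ge {E p : R} {n : nat} : 0 < E -> 0 <= p <= 1 ->
  (E%:E <= leader_stability_time p n)%E -> E / (1 + E) <= all_timely_prob p n.
Proof.
move=> E0 /andP[p0 p1]; set q := all_timely_prob p n.
have q1 : q <= 1 by exact: exprn_ile1.
have [q_eq1|q_neq1] := eqVneq q 1.
  by rewrite leader_stability_time_eq0 // lee_fin; lra.
have q_lt1 : q < 1 by rewrite lt_neqAle q_neq1.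
have q0 : 0 <= q by exact: exprn_ge0.
have := leader_stability_time_le p n; rewrite -/q q0 q_lt1 => /(_ isT) ub.
move=> /le_trans/(_ ub).
by rewrite lee_fin ler_pdivlMr ?subr_gt0 // ler_pdivrMr; lra.
Qed.

End LeaderStabilityTime.

Lemma root_le_of_le_expr {R : realType} (c p : R) (k : nat) :
  0 < c -> 0 <= p -> (0 < k)%N -> c <= p ^+ k -> c `^ (k%:R)^-1 <= p.
Proof.
move=> c0 p0 k0; rewrite -powR_mulrn // => /(ge0_ler_powR (r := (k%:R)^-1)).
rewrite -powRrM mulfV ?pnatr_eq0 -?lt0n // powRr1 //; apply.
- by rewrite invr_ge0.
- by rewrite nnegrE ltW.
- by rewrite nnegrE powR_ge0.
Qed.

Lemma deficit_le_of_le_expr {R : realFieldType} {c p : R} {k : nat} :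
  0 < c -> 0 <= p <= 1 -> c <= p ^+ k -> k%:R * (1 - p) <= (1 - c) / c.
Proof.
move=> c0 p01 cp; have /andP[_ p1] := p01.
have bern : c * (1 + k%:R * (1 - p)) <= 1.
  apply: le_trans (expr_Bernoulli_le1 p k p01).
  by rewrite ler_wpM2r // addr_ge0 // mulr_ge0 // subr_ge0.
rewrite ler_pdivlMr //; nra.
Qed.

Lemma cvg_to1_of_le_expr {R : realType} {c : R} {p : nat -> R} {N : nat} :
  0 < c -> (forall n, 0 <= p n <= 1) ->
  (forall n, (N <= n)%N -> c <= p n ^+ n.-1) -> p @ \oo --> (1 : R).
Proof.
move=> c0 p01 cp; apply/cvgrPdist_le => e e0.
have c1 : c <= 1.
  have /andP[pN0 pN1] := p01 N.
  by apply: le_trans (cp N (leqnn N)) _; exact: exprn_ile1.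
set M := Num.Def.archi_bound ((1 - c) / (c * e)).
have hM : (1 - c) / c < M%:R * e.
  rewrite -ltr_pdivrMr // -mulrA -invfM; apply: archi_boundP.
  by rewrite divr_ge0 ?subr_ge0 // mulr_ge0 // ltW.
near=> n; have /andP[p0 p1] := p01 n.
have Nn : (N <= n)%N by near: n; exists N.
have Mn : (M.+1 <= n)%N by near: n; exists M.+1.
have MK : M%:R <= (n.-1)%:R :> R by rewrite ler_nat; lia.
have deficit := deficit_le_of_le_expr c0 (p01 n) (cp n Nn).
rewrite ger0_norm ?subr_ge0 // leNgt; apply/negP => lt_e.
have : (n.-1)%:R * e <= (n.-1)%:R * (1 - p n) by rewrite ler_wpM2l // ltW.
have : M%:R * e <= (n.-1)%:R * e by rewrite ler_wpM2r // ltW.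
lra.
Unshelve. all: end_near.
Qed.

Theorem theorem3 (R : realType) :
  (* (1) for fixed p in [0,1), E(X) -> 0 exponentially fast in n *)
  (forall p : R, 0 <= p -> p < 1 ->
     exists C : R, exists a : R, [/\ 0 < C, 0 < a, a < 1 &
       forall n : nat, (2 <= n)%N ->
         (leader_stability_time p n <= (C * a ^+ n)%:E)%E])
  /\
  (* (2) if E(X) stays above E > 0 for all large n, then p_n -> 1 at the
     exponential-root rate p_n >= c^(1/(n-1)) for some constant c in (0,1] *)
  (forall (E : R) (p : nat -> R) (N : nat), 0 < E ->
     (forall n, 0 <= p n <= 1) ->
     (forall n, (N <= n)%N -> (E%:E <= leader_stability_time (p n) n)%E) ->
     p @ \oo --> (1 : R) /\
     exists c : R, [/\ 0 < c, c <= 1 &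
       forall n : nat, (N <= n)%N -> (2 <= n)%N ->
         c `^ ((n.-1)%:R)^-1 <= p n]).
Proof.
split; first exact: leader_stability_time_expn_decay.
move=> E p N E0 p01 E_le; set c := E / (1 + E).
have c0 : 0 < c by rewrite divr_gt0 // addr_gt0.
have c_le n : (N <= n)%N -> c <= p n ^+ n.-1.
  by move=> Nn; exact: all_timely_prob_ge (p01 n) (E_le n Nn).
split; first exact: cvg_to1_of_le_expr c0 p01 c_le.
exists c; split => //; first by rewrite ler_pdivrMr ?addr_gt0 // mul1r lerDr ltW.
move=> n Nn n2; have /andP[pn0 _] := p01 n.
apply: root_le_of_le_expr => //; last exact: c_le.
by rewrite -subn1 subn_gt0.
Qed.
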